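(* If $\mathcal{F}=\{f_i\}_{i=1}^N$ is an exact phase-retrievable frame for $\mathbb{R}^n$, then $2n-1\le N\le n(n+1)/2$.
   Context: A frame for $\mathbb{R}^n$ is a finite spanning sequence. It is phase-retrievable if $|\langle x,f_i\rangle|=|\langle y,f_i\rangle|$ for all $i$ implies $x=\pm y$. Let $\mathcal{S}_2$ be the set of real symmetric $n\times n$ matrices of rank at most $2$; for $\Lambda\subseteq\{1,\dots,N\}$ put $\Theta_{L(\mathcal{F}_\Lambda)}(A)=(f_i^TAf_i)_{i\in\Lambda}$. $\mathcal{F}$ has the exact PR-redundancy property if $\ker(\Theta_{L(\mathcal{F}_\Lambda)})\cap\mathcal{S}_2\neq\ker(\Theta_{L(\mathcal{F})})\cap\mathcal{S}_2$ for every proper subset $\Lambda$. An exact phase-retrievable frame is a phase-retrievable frame with the exact PR-redundancy property. *)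

From HB Require Import structures.
From mathcomp Require Import all_boot all_order all_algebra.
From mathcomp Require Import reals.
Set Implicit Arguments. Unset Strict Implicit. Unset Printing Implicit Defensive.
Import Order.TTheory GRing.Theory Num.Theory.
Local Open Scope ring_scope.

Definition inner (R : realType) (n : nat) (x y : 'rV[R]_n) : R := (x *m y^T) 0 0.

Definition frame_mx (R : realType) (n N : nat) (f : 'I_N -> 'rV[R]_n) : 'M[R]_(N, n) :=
  \matrix_(i < N, j < n) f i 0 j.

Definition is_frame (R : realType) (n N : nat) (f : 'I_N -> 'rV[R]_n) : bool :=
  row_full (frame_mx f).

Definition phase_retrievable (R : realType) (n N : nat) (f : 'I_N -> 'rV[R]_n) : Prop :=
  forall x y : 'rV[R]_n,
    (forall i, `|inner x (f i)| = `|inner y (f i)|) -> x = y \/ x = - y.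

Definition S2 (R : realType) (n : nat) (A : 'M[R]_n) : Prop :=
  A^T = A /\ (\rank A <= 2)%N.

Definition Theta (R : realType) (n N : nat) (f : 'I_N -> 'rV[R]_n)
    (Lam : {set 'I_N}) (A : 'M[R]_n) : {ffun {i : 'I_N | i \in Lam} -> R} :=
  [ffun i => (f (sval i) *m A *m (f (sval i))^T) 0 0].

Definition kerS2 (R : realType) (n N : nat) (f : 'I_N -> 'rV[R]_n)
    (Lam : {set 'I_N}) (A : 'M[R]_n) : Prop :=
  Theta f Lam A = 0 /\ S2 A.

Definition exact_PR_redundancy (R : realType) (n N : nat) (f : 'I_N -> 'rV[R]_n) : Prop :=
  forall Lam : {set 'I_N}, Lam \proper [set: 'I_N] ->
    ~ (forall A : 'M[R]_n, kerS2 f Lam A <-> kerS2 f [set: 'I_N] A).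

Definition exact_PR_frame (R : realType) (n N : nat) (f : 'I_N -> 'rV[R]_n) : Prop :=
  is_frame f /\ phase_retrievable f /\ exact_PR_redundancy f.

From mathcomp Require Import all_boot all_order all_algebra.
From mathcomp Require Import reals.
From mathcomp Require Import zify.
From Stdlib Require Import Classical.
Set Implicit Arguments. Unset Strict Implicit. Unset Printing Implicit Defensive.
Import Order.TTheory GRing.Theory Num.Theory.
Local Open Scope ring_scope.

(* Lower bound: if N <= 2n - 2, split the frame into two parts of fewer than n
   vectors each and pick nonzero u, v orthogonal to the first and the second
   part respectively.  Then u + v and u - v have the same measurements
   |<., f_i>| although u + v <> +-(u - v).
   Upper bound: exactness at i means that dropping f_i enlarges the kernel in
   S_2, which yields a symmetric A_i with f_j^T A_i f_j = 0 exactly for j <> i.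
   Such a family is linearly independent, and it lives in the space of
   symmetric matrices, of dimension n(n+1)/2. *)

Lemma card_ord_ltn N k : #|[pred i : 'I_N | (i < k)%N]| = minn k N.
Proof.
rewrite cardE size_filter -enumT -(count_map val (fun i => i < k)%N) val_enum_ord.
rewrite -size_filter -[X in filter _ X]/(iota 0 N).
case: (leqP k N) => [k_le_N | N_lt_k].
  by rewrite (filter_iota_ltn 0 k_le_N) size_iota; lia.
rewrite (eq_in_filter (a2 := predT)) ?filter_predT ?size_iota; first lia.
by move=> i; rewrite mem_iota /=; lia.
Qed.

Definition upper_pairs n := [pred p : 'I_n * 'I_n | (p.1 <= p.2)%N].

Lemma card_upper_pairs n : #|upper_pairs n| = 'C(n.+1, 2).
Proof.
rewrite -sum1_card -(pair_big_dep xpredT (fun i j : 'I_n => i <= j)%N (fun _ _ => 1%N)) /=.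
rewrite (exchange_big_dep xpredT) //=.
under eq_bigr => j _ do rewrite sum1_card.
under eq_bigr => j _ do rewrite (card_ord_ltn n j.+1) (minn_idPl (ltn_ord j)).
by rewrite -bin2_sum big_nat_recl // big_mkord.
Qed.

Section LinearAlgebra.

Variable F : fieldType.

Lemma tall_mx_left_kernel m p (M : 'M[F]_(m, p)) :
  (p < m)%N -> exists2 u : 'rV_m, u != 0 & u *m M = 0.
Proof.
move=> p_lt_m.
have /rowV0Pn[u /sub_kermxP uM u_neq0] : kermx M != 0.
  by rewrite kermx_eq0 /row_free neq_ltn (leq_ltn_trans (rank_leq_col M) p_lt_m).
by exists u.
Qed.

Lemma orthogonal_to_few n N (f : 'I_N -> 'rV[F]_n) (A : {set 'I_N}) :
  (#|A| < n)%N -> exists2 u : 'rV_n, u != 0 & forall i, i \in A -> u *m (f i)^T = 0.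
Proof.
move=> A_small.
pose G : 'M_(#|A|, n) := \matrix_(k < #|A|) f (enum_val k).
have [u u_neq0 uG] := tall_mx_left_kernel G^T A_small.
exists u => // i iA.
by rewrite -(enum_rankK_in iA iA) -(rowK (fun k => f (enum_val k))) tr_row colE mulmxA uG mul0mx.
Qed.

Definition qform n (x : 'rV[F]_n) (A : 'M_n) : F := (x *m A *m x^T) 0 0.

Lemma qform_sum n N (x : 'rV[F]_n) (c : 'rV[F]_N) (A : 'I_N -> 'M_n) :
  qform x (\sum_i c 0 i *: A i) = \sum_i c 0 i * qform x (A i).
Proof.
rewrite /qform mulmx_sumr mulmx_suml summxE; apply: eq_bigr => i _.
by rewrite -scalemxAr -scalemxAl mxE.
Qed.

Lemma dual_qform_free n N (f : 'I_N -> 'rV[F]_n) (A : 'I_N -> 'M_n) :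
    (forall i j, j != i -> qform (f j) (A i) = 0) ->
    (forall i, qform (f i) (A i) != 0) ->
  forall c : 'rV_N, \sum_i c 0 i *: A i = 0 -> c = 0.
Proof.
move=> off_diag diag c cA0; apply/rowP => j; rewrite mxE.
have : qform (f j) (\sum_i c 0 i *: A i) = c 0 j * qform (f j) (A j).
  rewrite qform_sum (bigD1 j) //= big1 ?addr0 // => i ij.
  by rewrite off_diag ?mulr0 // eq_sym.
rewrite cA0 /qform mulmx0 mul0mx mxE => /esym/eqP.
by rewrite mulf_eq0 (negbTE (diag j)) orbF => /eqP.
Qed.

Definition vech n (A : 'M[F]_n) : 'rV_#|upper_pairs n| :=
  \row_s A (enum_val s).1 (enum_val s).2.

Lemma vech_sum n N (c : 'rV[F]_N) (A : 'I_N -> 'M_n) :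
  vech (\sum_i c 0 i *: A i) = c *m \matrix_i vech (A i).
Proof.
rewrite mulmx_sum_row; apply/rowP => s; rewrite !mxE !summxE.
by apply: eq_bigr => i _; rewrite rowK !mxE.
Qed.

Lemma vech_sym_eq0 n (A : 'M[F]_n) : A^T = A -> vech A = 0 -> A = 0.
Proof.
move=> symA vA0.
have upper0 (a b : 'I_n) : (a <= b)%N -> A a b = 0.
  move=> ab; have ab_in : (a, b) \in upper_pairs n by [].
  by move/rowP: vA0 => /(_ (enum_rank_in ab_in (a, b))); rewrite !mxE enum_rankK_in.
apply/matrixP => a b; rewrite mxE.
case: (leqP a b) => [/upper0 // | /ltnW /upper0 ba0].
by rewrite -symA mxE.
Qed.

Lemma sym_free_card_le n N (A : 'I_N -> 'M[F]_n) :
    (forall i, (A i)^T = A i) ->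
    (forall c : 'rV_N, \sum_i c 0 i *: A i = 0 -> c = 0) ->
  (N <= 'C(n.+1, 2))%N.
Proof.
move=> symA freeA; rewrite -card_upper_pairs leqNgt; apply/negP => few_pairs.
have [c c_neq0 cM] := tall_mx_left_kernel (\matrix_i vech (A i)) few_pairs.
apply/negP: c_neq0; rewrite negbK; apply/eqP/freeA/vech_sym_eq0; last by rewrite vech_sum.
by rewrite linear_sum; apply: eq_bigr => i _; rewrite /= linearZ /= symA.
Qed.

End LinearAlgebra.

Section Frames.

Variables (R : realType) (n N : nat) (f : 'I_N -> 'rV[R]_n).

Lemma innerDl (u v w : 'rV[R]_n) : inner (u + v) w = inner u w + inner v w.
Proof. by rewrite /inner mulmxDl mxE. Qed.

Lemma innerBl (u v w : 'rV[R]_n) : inner (u - v) w = inner u w - inner v w.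
Proof. by rewrite /inner mulmxBl !mxE. Qed.

Lemma phase_retrievable_split (A : {set 'I_N}) (u v : 'rV[R]_n) :
    phase_retrievable f ->
    (forall i, i \in A -> inner u (f i) = 0) ->
    (forall i, i \notin A -> inner v (f i) = 0) ->
  u = 0 \/ v = 0.
Proof.
move=> PR uA vAc.
have opp_self_eq0 (w : 'rV[R]_n) : w = - w -> w = 0.
  by move/eqP; rewrite -subr_eq0 opprK -mulr2n -scaler_nat scalemx_eq0 pnatr_eq0 => /eqP.
have [i|/addrI/opp_self_eq0|] := PR (u + v) (u - v); [|by right|].
  rewrite innerDl innerBl; case: (boolP (i \in A)) => [/uA|/vAc] ->.
    by rewrite add0r sub0r normrN.
  by rewrite addr0 subr0.
by rewrite opprB addrC => /addrI/opp_self_eq0; left.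
Qed.

Lemma phase_retrievable_card : phase_retrievable f -> (2 * n - 1 <= N)%N.
Proof.
move=> PR; rewrite leqNgt; apply/negP => N_small.
pose A := [set i : 'I_N | (i < n.-1)%N].
have A_small : (#|A| < n)%N by rewrite cardsE card_ord_ltn; lia.
have Ac_small : (#|~: A| < n)%N.
  by have := cardsC A; rewrite cardsE card_ord_ltn card_ord; lia.
have [u u_neq0 uA] := orthogonal_to_few f A_small.
have [v v_neq0 vAc] := orthogonal_to_few f Ac_small.
have inner_eq0 (x w : 'rV[R]_n) : x *m w^T = 0 -> inner x w = 0.
  by rewrite /inner => ->; rewrite mxE.
have [u0|v0] : u = 0 \/ v = 0.
  apply: (phase_retrievable_split (A := A) PR) => i iA; apply/inner_eq0.
    exact: uA.
  by apply: vAc; rewrite inE.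
- by rewrite u0 eqxx in u_neq0.
- by rewrite v0 eqxx in v_neq0.
Qed.

Lemma Theta_eq0 (Lam : {set 'I_N}) (A : 'M[R]_n) :
  Theta f Lam A = 0 <-> forall j, j \in Lam -> qform (f j) A = 0.
Proof.
split=> [TA0 j jL | qA0].
  by have /ffunP/(_ (exist _ j jL)) := TA0; rewrite !ffunE.
by apply/ffunP => -[j jL]; rewrite !ffunE; apply: qA0.
Qed.

Lemma exact_PR_redundancy_dual : exact_PR_redundancy f ->
  forall i, exists A : 'M[R]_n,
    [/\ A^T = A, forall j, j != i -> qform (f j) A = 0 & qform (f i) A != 0].
Proof.
move=> redundant i.
have proper_i : [set~ i] \proper [set: 'I_N].
  by rewrite properT; apply/eqP => /setP/(_ i); rewrite !inE eqxx.
have [A not_iff] := not_all_ex_not _ _ (redundant _ proper_i).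
have ker_sub : kerS2 f [set: 'I_N] A -> kerS2 f [set~ i] A.
  by case=> /Theta_eq0 qA0 S2A; split=> //; apply/Theta_eq0 => j _; apply: qA0.
have not_kerT : ~ kerS2 f [set: 'I_N] A.
  by move=> kerT; apply: not_iff; split=> // _.
have [/Theta_eq0 off_i S2A] : kerS2 f [set~ i] A.
  by apply: NNPP => not_ker; apply: not_iff; split=> [/not_ker | /ker_sub].
exists A; split=> [| j ji |]; [exact: S2A.1 | by apply: off_i; rewrite !inE |].
apply/eqP => qi0; apply: not_kerT; split=> //; apply/Theta_eq0 => j _.
by case: (eqVneq j i) => [-> // | ji]; apply: off_i; rewrite !inE.
Qed.

End Frames.

Theorem corollary1p6 (R : realType) (n N : nat) (f : 'I_N -> 'rV[R]_n) :
  exact_PR_frame f -> (2 * n - 1 <= N)%N /\ (N <= n * (n + 1) %/ 2)%N.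
Proof.
case=> _ [PR redundant]; split; first exact: (phase_retrievable_card PR).
have [A dualA] := fin_all_exists (exact_PR_redundancy_dual redundant).
have -> : (n * (n + 1) %/ 2 = 'C(n.+1, 2))%N by rewrite bin2 -divn2 mulnC addn1.
apply: (sym_free_card_le (A := A)) => [i | ]; first by case: (dualA i).
by apply: (dual_qform_free (f := f)) => [i j | i]; case: (dualA i) => // _ off_i _ /off_i.
Qed.
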